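(* In the linear setting below, assume $Q=Q^\top\succ0$, $R=R^\top\succ0$, $P=P^\top\succ0$ and $-(K^\top RK+Q)\succeq(A-BK)^\top P(A-BK)-P$. Define the terminal set $\mathcal T=\{(x,r):\Delta(x,r)\le0\}$, where $\Delta(x,r)=\max_{i\in\{1,\dots,n\}}\alpha_i[V(x,r)-\Lambda_i(r)]$ with positive scalars $\alpha_i$, $V(x,r)=\|x-\bar x_r\|_P^2$, and $$\Lambda_i(r)=\frac{[d_i(r)-c_i(r)^\top\bar x_r]^2}{c_i(r)^\top P^{-1}c_i(r)},$$ where $\{x:c_i(r)^\top x\le d_i(r),\ i=1,\dots,n\}=\mathcal C\cap\{x:\kappa_T(x,r)\in\mathcal U\}\cap\bigcap_{j=1}^m H_{\mathcal O_j}(\bar x_r)$. Then: (c) for all $(x,r)\in\mathcal T$, $(Ax+B\kappa_T(x,r),r)\in\mathcal T$, $x\in\mathcal X$ and $\kappa_T(x,r)\in\mathcal U$; and (d) $(\bar x_r,r)\in\operatorname{int}\mathcal T$ for all $r\in\mathcal R_\epsilon$.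
   Context: System $x_{k+1}=Ax_k+Bu_k$ with $(A,B)$ stabilizable; equilibria $\bar x_r=G_xr$, $\bar u_r=G_ur$, where the columns of $[G_x^\top\ G_u^\top]^\top$ form a basis of $\ker[A-I\ \ B]$. Constraints $x\in\mathcal X=\mathcal C\cap\bigcap_{j=1}^m\mathcal O_j^{\complement}$, $u\in\mathcal U$, where $\mathcal C$ and $\mathcal U$ are compact polyhedra and each $\mathcal O_j\subseteq\mathbb R^{n_x}$ is a convex obstacle (inflated by a safety margin). Writing $\mathcal X=\{x:h_x(x)\le0\}$, $\mathcal U=\{u:h_u(u)\le0\}$, for fixed $\epsilon>0$ set $\mathcal R_\epsilon=\{r: h_x(\bar x_r)\le-\epsilon,\ h_u(\bar u_r)\le-\epsilon\}$. Terminal law $\kappa_T(x,r)=\bar u_r-K(x-\bar x_r)$, $K\in\mathbb R^{n_u\times n_x}$; $\|z\|_M^2=z^\top Mz$. For an obstacle $\mathcal O$: $\Pi_{\mathcal O}(x)=\arg\min_{y\in\mathcal O}\|x-y\|$ and $H_{\mathcal O}(x)=\{y:[x-\Pi_{\mathcal O}(x)]^\top[y-\Pi_{\mathcal O}(x)]\ge0\}$ (a half-space over-approximation of $\mathcal O^{\complement}$). *)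

From HB Require Import structures.
From mathcomp Require Import all_boot all_order all_algebra.
From mathcomp Require Import boolp classical_sets reals ereal topology normedtype sequences.
Set Implicit Arguments.
Unset Strict Implicit.
Unset Printing Implicit Defensive.
Import Order.TTheory GRing.Theory Num.Theory numFieldNormedType.Exports.
Local Open Scope ring_scope.
Local Open Scope classical_set_scope.

Definition qf {R : realType} {n : nat} (M : 'M[R]_n) (x : 'cV[R]_n) : R :=
  (x^T *m M *m x) 0 0.

Definition symmetric {R : realType} {n : nat} (M : 'M[R]_n) : Prop := M^T = M.

Definition posdef {R : realType} {n : nat} (M : 'M[R]_n) : Prop :=
  symmetric M /\ forall x : 'cV[R]_n, x != 0 -> 0 < qf M x.

Definition psd {R : realType} {n : nat} (M : 'M[R]_n) : Prop :=
  forall x : 'cV[R]_n, 0 <= qf M x.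

Definition enorm {R : realType} {n : nat} (x : 'cV[R]_n) : R :=
  Num.sqrt (qf 1%:M x).

Definition stabilizable {R : realType} {nx nu : nat}
  (A : 'M[R]_nx) (B : 'M[R]_(nx, nu)) : Prop :=
  exists F : 'M[R]_(nu, nx), forall i j : 'I_nx,
    (fun k : nat => ((A + B *m F) ^+ k) i j) @ \oo --> (0 : R).

Definition equilibrium_basis {R : realType} {nx nu nr : nat}
  (A : 'M[R]_nx) (B : 'M[R]_(nx, nu)) (Gx : 'M[R]_(nx, nr)) (Gu : 'M[R]_(nu, nr)) : Prop :=
  let M := row_mx (A - 1%:M) B in
  let G := col_mx Gx Gu in
  [/\ M *m G = 0,
      (forall z : 'cV[R]_(nx + nu), M *m z = 0 -> exists w : 'cV[R]_nr, z = G *m w)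
    & (forall w : 'cV[R]_nr, G *m w = 0 -> w = 0)].

Definition polyhedron {R : realType} {p n : nat} (F : 'M[R]_(p, n)) (f : 'cV[R]_p)
  : set 'cV[R]_n := [set x | forall i, (F *m x) i 0 <= f i 0].

Definition ebounded {R : realType} {n : nat} (S : set 'cV[R]_n) : Prop :=
  exists M : R, forall x, S x -> enorm x <= M.

Definition convex_set {R : realType} {n : nat} (S : set 'cV[R]_n) : Prop :=
  forall x y (t : R), S x -> S y -> 0 <= t <= 1 -> S (t *: x + (1 - t) *: y).

Definition eopen {R : realType} {n : nat} (S : set 'cV[R]_n) : Prop :=
  forall x, S x -> exists2 e : R, 0 < e & forall y, enorm (y - x) < e -> S y.

Definition in_closure {R : realType} {n : nat} (S : set 'cV[R]_n) (z : 'cV[R]_n) : Prop :=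
  forall e : R, 0 < e -> exists2 y, S y & enorm (z - y) < e.

Definition is_proj {R : realType} {n : nat} (S : set 'cV[R]_n) (x p : 'cV[R]_n) : Prop :=
  in_closure S p /\ forall y, S y -> enorm (x - p) <= enorm (x - y).

Definition edist {R : realType} {n : nat} (S : set 'cV[R]_n) (x : 'cV[R]_n) : R :=
  inf [set enorm (x - y) | y in S].

Definition sdist {R : realType} {n : nat} (S : set 'cV[R]_n) (x : 'cV[R]_n) : R :=
  edist (~` S) x - edist S x.

Definition xbar {R : realType} {nx nr : nat} (Gx : 'M[R]_(nx, nr)) (r : 'cV[R]_nr)
  : 'cV[R]_nx := Gx *m r.
Definition ubar {R : realType} {nu nr : nat} (Gu : 'M[R]_(nu, nr)) (r : 'cV[R]_nr)
  : 'cV[R]_nu := Gu *m r.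

Definition kappaT {R : realType} {nx nu nr : nat} (Gx : 'M[R]_(nx, nr))
  (Gu : 'M[R]_(nu, nr)) (K : 'M[R]_(nu, nx)) (x : 'cV[R]_nx) (r : 'cV[R]_nr)
  : 'cV[R]_nu := ubar Gu r - K *m (x - xbar Gx r).

Definition Xset {R : realType} {nx pc m : nat} (Fc : 'M[R]_(pc, nx)) (fc : 'cV[R]_pc)
  (O : 'I_m -> set 'cV[R]_nx) : set 'cV[R]_nx :=
  [set x | polyhedron Fc fc x /\ forall j, ~ O j x].

(* Row (c_i(r), d_i(r)) of the half-space description of
     C /\ {x | kappa_T(x,r) in U} /\ (intersection_j H_{O_j}(xbar_r)),
   with U = {Fu u <= fu}. Indices: first pc rows of C, then pu rows coming
   from the input constraint, then one row per obstacle half-space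
   H_O(xbar) = {y | (xbar - Pi(xbar))^T (y - Pi(xbar)) >= 0}. *)
Definition crow {R : realType} {nx nu nr pc pu m : nat}
  (Fc : 'M[R]_(pc, nx)) (fc : 'cV[R]_pc) (Fu : 'M[R]_(pu, nu)) (fu : 'cV[R]_pu)
  (Pi : 'I_m -> 'cV[R]_nx -> 'cV[R]_nx)
  (Gx : 'M[R]_(nx, nr)) (Gu : 'M[R]_(nu, nr)) (K : 'M[R]_(nu, nx))
  (r : 'cV[R]_nr) (i : 'I_(pc + pu + m)) : 'cV[R]_nx * R :=
  match split i with
  | inl i1 =>
      match split i1 with
      | inl ic => ((row ic Fc)^T, fc ic 0)
      | inr iu => (- (row iu (Fu *m K))^T,
                   fu iu 0 - (Fu *m ubar Gu r) iu 0 - (Fu *m K *m xbar Gx r) iu 0)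
      end
  | inr j =>
      let p := Pi j (xbar Gx r) in
      let w := xbar Gx r - p in
      (- w, - (w^T *m p) 0 0)
  end.

Definition Lambda {R : realType} {nx nu nr pc pu m : nat}
  (Fc : 'M[R]_(pc, nx)) (fc : 'cV[R]_pc) (Fu : 'M[R]_(pu, nu)) (fu : 'cV[R]_pu)
  (Pi : 'I_m -> 'cV[R]_nx -> 'cV[R]_nx)
  (Gx : 'M[R]_(nx, nr)) (Gu : 'M[R]_(nu, nr)) (K : 'M[R]_(nu, nx)) (P : 'M[R]_nx)
  (i : 'I_(pc + pu + m)) (r : 'cV[R]_nr) : R :=
  let cd := crow Fc fc Fu fu Pi Gx Gu K r i in
  (cd.2 - (cd.1^T *m xbar Gx r) 0 0) ^+ 2 / qf (invmx P) cd.1.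

Definition Vfun {R : realType} {nx nr : nat} (Gx : 'M[R]_(nx, nr)) (P : 'M[R]_nx)
  (x : 'cV[R]_nx) (r : 'cV[R]_nr) : R := qf P (x - xbar Gx r).

(* Delta(x,r) = max_i alpha_i [V(x,r) - Lambda_i(r)], the max ranging over the
   (non-degenerate, c_i(r) <> 0) rows of the description; max of the empty
   family is -oo. *)
Definition Delta {R : realType} {nx nu nr pc pu m : nat}
  (Fc : 'M[R]_(pc, nx)) (fc : 'cV[R]_pc) (Fu : 'M[R]_(pu, nu)) (fu : 'cV[R]_pu)
  (Pi : 'I_m -> 'cV[R]_nx -> 'cV[R]_nx)
  (Gx : 'M[R]_(nx, nr)) (Gu : 'M[R]_(nu, nr)) (K : 'M[R]_(nu, nx)) (P : 'M[R]_nx)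
  (alpha : 'I_(pc + pu + m) -> R) (x : 'cV[R]_nx) (r : 'cV[R]_nr) : \bar R :=
  \big[maxe/-oo%E]_(i < pc + pu + m | (crow Fc fc Fu fu Pi Gx Gu K r i).1 != 0)
     ((alpha i * (Vfun Gx P x r - Lambda Fc fc Fu fu Pi Gx Gu K P i r))%:E).

Definition Tset {R : realType} {nx nu nr pc pu m : nat}
  (Fc : 'M[R]_(pc, nx)) (fc : 'cV[R]_pc) (Fu : 'M[R]_(pu, nu)) (fu : 'cV[R]_pu)
  (Pi : 'I_m -> 'cV[R]_nx -> 'cV[R]_nx)
  (Gx : 'M[R]_(nx, nr)) (Gu : 'M[R]_(nu, nr)) (K : 'M[R]_(nu, nx)) (P : 'M[R]_nx)
  (alpha : 'I_(pc + pu + m) -> R) (x : 'cV[R]_nx) (r : 'cV[R]_nr) : Prop :=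
  (Delta Fc fc Fu fu Pi Gx Gu K P alpha x r <= 0)%E.

Definition Reps {R : realType} {nx nu nr pc pu m : nat}
  (Fc : 'M[R]_(pc, nx)) (fc : 'cV[R]_pc) (Fu : 'M[R]_(pu, nu)) (fu : 'cV[R]_pu)
  (O : 'I_m -> set 'cV[R]_nx) (Gx : 'M[R]_(nx, nr)) (Gu : 'M[R]_(nu, nr))
  (eps : R) : set 'cV[R]_nr :=
  [set r | [/\ forall i, (Fc *m xbar Gx r - fc) i 0 <= - eps,
              forall j, sdist (O j) (xbar Gx r) <= - eps
            & forall i, (Fu *m ubar Gu r - fu) i 0 <= - eps]].

Definition interior_pt {R : realType} {nx nr : nat}
  (T : 'cV[R]_nx -> 'cV[R]_nr -> Prop) (x : 'cV[R]_nx) (r : 'cV[R]_nr) : Prop :=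
  exists2 e : R, 0 < e & forall x' r', enorm (x' - x) < e -> enorm (r' - r) < e -> T x' r'.

From Pilot Require Import Defs.
From HB Require Import structures.
From mathcomp Require Import all_boot all_order all_algebra.
From mathcomp Require Import boolp classical_sets reals ereal topology normedtype sequences.
From mathcomp Require Import ring lra.
Import Order.TTheory GRing.Theory Num.Theory numFieldNormedType.Exports.
Set Implicit Arguments.
Unset Strict Implicit.
Unset Printing Implicit Defensive.
Local Open Scope ring_scope.
Local Open Scope classical_set_scope.

(* The terminal set is an intersection of sublevel sets of V(., r) = |. - xbar_r|_P^2.
   Cauchy-Schwarz in the P-metric gives c^T (x - xbar_r) <= sqrt (V(x, r) c^T P^-1 c), so the
   ellipsoid {V <= Lambda_i(r)} lies in the half-space {c_i^T x <= d_i} as soon as the slack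
   d_i - c_i^T xbar_r is nonnegative, which r in R_eps guarantees. Hence T lies in C, in
   {kappa_T in U} and in every H_{O_j}(xbar_r), and the latter misses the open convex obstacle O_j
   by the variational inequality of the projection. The Lyapunov inequality makes V nonincreasing
   along the closed loop while the Lambda_i depend on r only, so T is invariant. For (d), the
   margin eps keeps every slack, hence every Lambda_i, bounded below for r' near r, whereas
   V(x', r') tends to 0 as (x', r') tends to (xbar_r, r). *)

Lemma quad_ge0_discr (R : realFieldType) (a b c : R) :
  0 <= a -> (forall t, 0 <= a * t ^+ 2 + 2 * b * t + c) -> b ^+ 2 <= a * c.
Proof.
move=> a_ge0 q_ge0; have [a_gt0|] := ltP 0 a.
  have := q_ge0 (- b / a).
  have -> : a * (- b / a) ^+ 2 + 2 * b * (- b / a) + c = c - b ^+ 2 / a.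
    by field; rewrite gt_eqF.
  by rewrite subr_ge0 ler_pdivrMr // mulrC.
move=> a_le0; have a0 : a = 0 by apply/eqP; rewrite eq_le a_le0 a_ge0.
rewrite {a_ge0 a_le0}a0 mul0r in q_ge0 *.
have [-> |b_neq0] := eqVneq b 0; first by rewrite expr0n.
have := q_ge0 (- (c + 1) / (2 * b)).
have -> : 0 * (- (c + 1) / (2 * b)) ^+ 2 + 2 * b * (- (c + 1) / (2 * b)) + c = -1.
  by field.
by rewrite ler0N1.
Qed.

Definition dotv {R : realType} {n : nat} (x y : 'cV[R]_n) : R := (x^T *m y) 0 0.

Section DotProduct.
Variables (R : realType) (n : nat).
Implicit Types (x y z : 'cV[R]_n) (a : R).

Lemma dotvE x y : dotv x y = \sum_i x i 0 * y i 0.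
Proof. by rewrite /dotv !mxE; apply: eq_bigr => i _; rewrite !mxE. Qed.

Lemma dotvC x y : dotv x y = dotv y x.
Proof. by rewrite !dotvE; apply: eq_bigr => i _; rewrite mulrC. Qed.

Lemma dotvDl x y z : dotv (x + y) z = dotv x z + dotv y z.
Proof. by rewrite /dotv linearD mulmxDl mxE. Qed.

Lemma dotvZl a x y : dotv (a *: x) y = a * dotv x y.
Proof. by rewrite /dotv linearZ -scalemxAl mxE. Qed.

Lemma dotvNl x y : dotv (- x) y = - dotv x y.
Proof. by rewrite -scaleN1r dotvZl mulN1r. Qed.

Lemma dotvBl x y z : dotv (x - y) z = dotv x z - dotv y z.
Proof. by rewrite dotvDl dotvNl. Qed.

Lemma dotvDr x y z : dotv x (y + z) = dotv x y + dotv x z.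
Proof. by rewrite !(dotvC x) dotvDl. Qed.

Lemma dotvZr a x y : dotv x (a *: y) = a * dotv x y.
Proof. by rewrite !(dotvC x) dotvZl. Qed.

Lemma dotvNr x y : dotv x (- y) = - dotv x y.
Proof. by rewrite !(dotvC x) dotvNl. Qed.

Lemma dotvBr x y z : dotv x (y - z) = dotv x y - dotv x z.
Proof. by rewrite !(dotvC x) dotvBl. Qed.

Lemma dotv0l y : dotv 0 y = 0.
Proof. by rewrite /dotv trmx0 mul0mx mxE. Qed.

Lemma dotv_ge0 x : 0 <= dotv x x.
Proof. by rewrite dotvE sumr_ge0 // => i _; rewrite -expr2 sqr_ge0. Qed.

Lemma dotv_eq0 x : (dotv x x == 0) = (x == 0).
Proof.
apply/idP/eqP => [|->]; last by rewrite dotv0l.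
rewrite dotvE psumr_eq0 => [/allP x0|i _]; last by rewrite -expr2 sqr_ge0.
apply/matrixP => i j; rewrite (ord1 j) mxE.
by have := x0 i (mem_index_enum i); rewrite -expr2 sqrf_eq0 => /eqP.
Qed.

Lemma dotv_mulmx k (M : 'M[R]_(k, n)) (x : 'cV[R]_k) y :
  dotv x (M *m y) = dotv (M^T *m x) y.
Proof. by rewrite /dotv trmx_mul trmxK mulmxA. Qed.

Lemma dotv_row k (M : 'M[R]_(k, n)) i y : dotv (row i M)^T y = (M *m y) i 0.
Proof. by rewrite /dotv trmxK -row_mul mxE. Qed.

Lemma qfE (M : 'M[R]_n) x : qf M x = dotv x (M *m x).
Proof. by rewrite /qf /dotv mulmxA. Qed.

Lemma cauchy_schwarz (M : 'M[R]_n) x y : Defs.symmetric M -> psd M ->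
  dotv x (M *m y) ^+ 2 <= qf M x * qf M y.
Proof.
move=> symM psdM; apply: quad_ge0_discr => [|t]; first exact: psdM.
have yx : dotv y (M *m x) = dotv x (M *m y) by rewrite dotv_mulmx symM dotvC.
have -> : qf M x * t ^+ 2 + 2 * dotv x (M *m y) * t + qf M y = qf M (t *: x + y).
  by rewrite !qfE mulmxDr -scalemxAr !(dotvDl, dotvDr, dotvZl, dotvZr) yx; ring.
exact: psdM.
Qed.

Lemma qfD (M N : 'M[R]_n) x : qf (M + N) x = qf M x + qf N x.
Proof. by rewrite !qfE mulmxDl dotvDr. Qed.

Lemma qfN (M : 'M[R]_n) x : qf (- M) x = - qf M x.
Proof. by rewrite !qfE mulNmx dotvNr. Qed.

Lemma qfB (M N : 'M[R]_n) x : qf (M - N) x = qf M x - qf N x.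
Proof. by rewrite qfD qfN. Qed.

Lemma qf1 x : qf 1%:M x = dotv x x.
Proof. by rewrite qfE mul1mx. Qed.

Lemma psd1 : psd (1%:M : 'M[R]_n).
Proof. by move=> x; rewrite qf1 dotv_ge0. Qed.

Lemma enormE x : enorm x = Num.sqrt (dotv x x).
Proof. by rewrite /enorm qf1. Qed.

Lemma enorm_ge0 x : 0 <= enorm x.
Proof. exact: sqrtr_ge0. Qed.

Lemma enorm_sqr x : enorm x ^+ 2 = dotv x x.
Proof. by rewrite enormE sqr_sqrtr // dotv_ge0. Qed.

Lemma enorm_le x a : 0 <= a -> (enorm x <= a) = (dotv x x <= a ^+ 2).
Proof.
by move=> a_ge0; rewrite enormE -[in RHS]ler_sqrt ?sqr_ge0 // sqrtr_sqr ger0_norm.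
Qed.

Lemma enormZ a x : enorm (a *: x) = `|a| * enorm x.
Proof. by rewrite !enormE dotvZl dotvZr mulrA -expr2 sqrtrM ?sqr_ge0 // sqrtr_sqr. Qed.

Lemma enormN x : enorm (- x) = enorm x.
Proof. by rewrite -scaleN1r enormZ normrN1 mul1r. Qed.

Lemma enorm0 : enorm (0 : 'cV[R]_n) = 0.
Proof. by rewrite enormE dotv0l sqrtr0. Qed.

Lemma dotv_le_enorm x y : `|dotv x y| <= enorm x * enorm y.
Proof.
rewrite -ler_sqr ?nnegrE ?mulr_ge0 ?enorm_ge0 // real_normK ?num_real //.
rewrite exprMn !enorm_sqr -!qf1 -[y in dotv x y]mul1mx.
exact: cauchy_schwarz (trmx1 _ _) psd1.
Qed.

Lemma enormD x y : enorm (x + y) <= enorm x + enorm y.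
Proof.
rewrite enorm_le ?addr_ge0 ?enorm_ge0 // sqrrD !enorm_sqr dotvDl !dotvDr (dotvC y x).
by have := ler_norm (dotv x y); have := dotv_le_enorm x y; lra.
Qed.

Lemma entry_le_enorm x i : `|x i 0| <= enorm x.
Proof.
rewrite -ler_sqr ?nnegrE ?enorm_ge0 // real_normK ?num_real // enorm_sqr dotvE.
rewrite (bigD1 i) //= -expr2 lerDl.
by rewrite sumr_ge0 // => j _; rewrite -expr2 sqr_ge0.
Qed.

End DotProduct.

Section MatrixBounds.
Variables (R : realType) (k n : nat).
Implicit Types (x : 'cV[R]_n).

Lemma mulmx_enorm_le (M : 'M[R]_(k, n)) :
  exists2 C, 0 <= C & forall x, enorm (M *m x) <= C * enorm x.
Proof.
exists (Num.sqrt (\sum_i enorm (row i M)^T ^+ 2)) => [|x]; first exact: sqrtr_ge0.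
rewrite enorm_le ?mulr_ge0 ?sqrtr_ge0 ?enorm_ge0 // exprMn sqr_sqrtr; last first.
  by rewrite sumr_ge0 // => i _; rewrite sqr_ge0.
rewrite dotvE mulr_suml; apply: ler_sum => i _; rewrite -expr2 -dotv_row -exprMn.
rewrite -real_normK ?num_real // lerXn2r ?nnegrE ?mulr_ge0 ?enorm_ge0 //.
exact: dotv_le_enorm.
Qed.

Lemma mulmx_enorm_small (M : 'M[R]_(k, n)) (e : R) : 0 < e ->
  exists2 d, 0 < d & forall x, enorm x < d -> enorm (M *m x) <= e.
Proof.
move=> e_gt0; have [C C_ge0 MC] := mulmx_enorm_le M.
have C1_gt0 : 0 < C + 1 by rewrite ltr_wpDl.
exists (e / (C + 1)) => [|x x_lt]; first by rewrite divr_gt0.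
have -> : e = (C + 1) * (e / (C + 1)) by rewrite mulrC divfK ?lt0r_neq0.
by apply: le_trans (MC x) _; rewrite ler_pM ?enorm_ge0 ?(ltW x_lt) // lerDl.
Qed.

End MatrixBounds.

Section QuadraticBounds.
Variables (R : realType) (n : nat).
Implicit Types (x : 'cV[R]_n).

Lemma qf_le_enorm (M : 'M[R]_n) :
  exists2 C, 0 <= C & forall x, qf M x <= C * enorm x ^+ 2.
Proof.
have [C C_ge0 MC] := mulmx_enorm_le M; exists C => // x.
rewrite qfE; apply: le_trans (ler_norm _) _; apply: le_trans (dotv_le_enorm _ _) _.
by rewrite mulrC expr2 mulrA ler_wpM2r ?enorm_ge0.
Qed.

Lemma qf_small (M : 'M[R]_n) (mu : R) : 0 < mu ->
  exists2 s, 0 < s & forall x, enorm x <= s -> qf M x <= mu.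
Proof.
move=> mu_gt0; have [C C_ge0 MC] := qf_le_enorm M.
have C1_gt0 : 0 < C + 1 by rewrite ltr_wpDl.
have q_gt0 : 0 < mu / (C + 1) by rewrite divr_gt0.
exists (Num.sqrt (mu / (C + 1))) => [|x x_le]; first by rewrite sqrtr_gt0.
apply: le_trans (MC x) _.
have : enorm x ^+ 2 <= mu / (C + 1).
  by rewrite -(sqr_sqrtr (ltW q_gt0)) lerXn2r ?nnegrE ?enorm_ge0 ?sqrtr_ge0.
rewrite ler_pdivlMr // => sq_le; have := enorm_ge0 x; nra.
Qed.

End QuadraticBounds.

Lemma posdef_psd (R : realType) n (M : 'M[R]_n) : posdef M -> psd M.
Proof.
move=> [_ M_pos] x; have [->|x_neq0] := eqVneq x 0; last exact/ltW/M_pos.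
by rewrite qfE dotv0l.
Qed.

Section Ellipsoid.
Variables (R : realType) (n : nat) (P : 'M[R]_n).
Hypothesis P_posdef : posdef P.
Implicit Types (c x z : 'cV[R]_n).

Lemma posdef_unitmx : P \in unitmx.
Proof.
case: P_posdef => _ P_pos; rewrite unitmxE unitfE; apply/negP => /det0P [v v_neq0 vP].
suff /P_pos : v^T != 0 by rewrite /qf trmxK vP mul0mx mxE ltxx.
by apply: contra v_neq0 => /eqP vT0; rewrite -[v]trmxK vT0 trmx0.
Qed.

Lemma mulmx_invmx c : P *m (invmx P *m c) = c.
Proof. by rewrite mulmxA mulmxV ?mul1mx // posdef_unitmx. Qed.

Lemma dotv_mulmx_sym x z : dotv (P *m x) z = dotv x (P *m z).
Proof. by rewrite dotv_mulmx (proj1 P_posdef). Qed.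

Lemma qf_invmx c : qf (invmx P) c = qf P (invmx P *m c).
Proof. by rewrite !qfE mulmx_invmx dotvC. Qed.

Lemma qf_invmx_gt0 c : c != 0 -> 0 < qf (invmx P) c.
Proof.
move=> c_neq0; rewrite qf_invmx; apply: (proj2 P_posdef).
by apply: contra c_neq0 => /eqP y0; rewrite -(mulmx_invmx c) y0 mulmx0.
Qed.

Lemma dotv_sqr_le_qf c z : dotv c z ^+ 2 <= qf (invmx P) c * qf P z.
Proof.
rewrite qf_invmx -{1}(mulmx_invmx c) dotv_mulmx_sym.
exact: cauchy_schwarz (proj1 P_posdef) (posdef_psd P_posdef).
Qed.

Lemma ellipsoid_sub_halfspace c (d : R) xb x : c != 0 -> 0 <= d - dotv c xb ->
  qf P (x - xb) <= (d - dotv c xb) ^+ 2 / qf (invmx P) c -> dotv c x <= d.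
Proof.
move=> c_neq0 slack_ge0; rewrite ler_pdivlMr ?qf_invmx_gt0 // mulrC => V_le.
have : `|dotv c (x - xb)| <= d - dotv c xb.
  rewrite -ler_sqr ?nnegrE // real_normK ?num_real //.
  exact: le_trans (dotv_sqr_le_qf c (x - xb)) V_le.
by rewrite dotvBr => /(le_trans (ler_norm _)); lra.
Qed.

End Ellipsoid.

Section Distance.
Variables (R : realType) (n : nat).
Implicit Types (S : set 'cV[R]_n) (x y : 'cV[R]_n).

Lemma edist_ge0 S x : 0 <= Defs.edist S x.
Proof.
have [[y Sy]|S0] := pselect (S !=set0).
  by apply: lb_le_inf => [|_ [z _ <-]]; [exists (enorm (x - y)), y | exact: enorm_ge0].
suff -> : S = set0 by rewrite /Defs.edist image_set0 inf0.
by apply/seteqP; split => // y Sy; apply: S0; exists y.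
Qed.

Lemma edist_le S x y : S y -> Defs.edist S x <= enorm (x - y).
Proof.
by move=> Sy; apply: ge_inf; [exists 0 => _ [z _ <-]; exact: enorm_ge0 | exists y].
Qed.

Lemma sdist_enorm_ge S (eps : R) x y :
  sdist S x <= - eps -> S y -> eps <= enorm (x - y).
Proof.
move=> + /(edist_le x); have := edist_ge0 (~` S) x; rewrite /sdist; lra.
Qed.

End Distance.

Section Projection.
Variables (R : realType) (n : nat) (O : set 'cV[R]_n).
Implicit Types (x y p q : 'cV[R]_n).

Lemma in_closure_enorm_ge (a : R) x q :
  (forall y, O y -> a <= enorm (x - y)) -> in_closure O q -> a <= enorm (x - q).
Proof.
move=> O_ge q_cl; apply/ler_addgt0Pr => e e_gt0.
have [y Oy qy_lt] := q_cl e e_gt0.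
apply: le_trans (O_ge y Oy) _.
have -> : x - y = (x - q) + (q - y) by rewrite addrA subrK.
by apply: le_trans (enormD _ _) _; rewrite lerD2l ltW.
Qed.

Lemma in_closure_convex (t : R) y p : convex_set O -> O y -> in_closure O p ->
  0 <= t <= 1 -> in_closure O (t *: y + (1 - t) *: p).
Proof.
move=> O_convex Oy p_cl t01 e e_gt0; have [z Oz pz_lt] := p_cl e e_gt0.
exists (t *: y + (1 - t) *: z); first exact: O_convex.
rewrite opprD addrACA subrr add0r -scalerBr enormZ.
by apply: le_lt_trans pz_lt; rewrite ger0_norm ?subr_ge0 ?ler_piMl ?enorm_ge0 //; lra.
Qed.

Variables (xb p : 'cV[R]_n).
Hypotheses (O_convex : convex_set O) (p_cl : in_closure O p)
  (p_min : forall y, O y -> enorm (xb - p) <= enorm (xb - y)).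

Lemma proj_variational y : O y -> dotv (xb - p) (y - p) <= 0.
Proof.
move=> Oy; have closer t : 0 <= t <= 1 ->
    dotv (xb - p) (xb - p) <= dotv (xb - p - t *: (y - p)) (xb - p - t *: (y - p)).
  move=> t01; rewrite -!enorm_sqr lerXn2r ?nnegrE ?enorm_ge0 //.
  have -> : xb - p - t *: (y - p) = xb - (t *: y + (1 - t) *: p).
    by apply/matrixP => i j; rewrite !mxE; ring.
  exact/(in_closure_enorm_ge p_min)/in_closure_convex.
move: closer; set w := xb - p; set v := y - p; clearbody w v => closer.
rewrite leNgt; apply/negP => g_gt0; have vv_ge0 := dotv_ge0 v.
set t := dotv w v / (dotv w v + dotv v v).
have tE : t * (dotv w v + dotv v v) = dotv w v by rewrite divfK // gt_eqF // ltr_wpDr.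
have t_gt0 : 0 < t by rewrite divr_gt0 // ltr_wpDr.
have t_le1 : t <= 1 by rewrite ler_pdivrMr ?mul1r ?lerDl // ltr_wpDr.
have := closer t; rewrite (ltW t_gt0) t_le1 => /(_ isT).
rewrite !(dotvBl, dotvBr, dotvZl, dotvZr) (dotvC v w); nra.
Qed.

Lemma proj_separates x :
  eopen O -> xb - p != 0 -> 0 <= dotv (xb - p) (x - p) -> ~ O x.
Proof.
move=> O_open w_neq0 x_ge Ox; have [e e_gt0 ball_e] := O_open x Ox.
set w := xb - p in w_neq0 x_ge *.
have ew_gt0 : 0 < enorm w + 1 by rewrite ltr_wpDl ?enorm_ge0.
set s := e / (enorm w + 1); have s_gt0 : 0 < s by rewrite divr_gt0.
have Oy : O (x + s *: w).
  apply: ball_e; rewrite addrAC subrr add0r enormZ gtr0_norm //.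
  by rewrite mulrAC ltr_pdivrMr // ltr_pM2l // ltrDl.
have := proj_variational Oy; rewrite -/w addrAC dotvDr dotvZr.
have : 0 < dotv w w by rewrite lt0r dotv_eq0 w_neq0 dotv_ge0.
by move=> ww_gt0; rewrite leNgt ltr_wpDl // mulr_gt0.
Qed.

End Projection.

Lemma finite_ub (R : realType) (I : finType) (f : I -> R) :
  exists2 M, 0 <= M & forall i, f i <= M.
Proof.
exists (\sum_i `|f i|) => [|i]; first exact: sumr_ge0.
apply: le_trans (ler_norm _) _; rewrite (bigD1 i) //= lerDl.
exact: sumr_ge0.
Qed.

Lemma lyapunov_qf_le (R : realType) (nx nu : nat)
    (A : 'M[R]_nx) (B : 'M[R]_(nx, nu)) (K : 'M[R]_(nu, nx)) (Q P : 'M[R]_nx) (Rw : 'M[R]_nu) z :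
  psd Q -> psd Rw ->
  psd (- (K^T *m Rw *m K + Q) - ((A - B *m K)^T *m P *m (A - B *m K) - P)) ->
  qf P ((A - B *m K) *m z) <= qf P z.
Proof.
have qfT k (M : 'M[R]_k) (L : 'M[R]_(k, nx)) : qf (L^T *m M *m L) z = qf M (L *m z).
  by rewrite /qf trmx_mul !mulmxA.
move=> Q_psd Rw_psd /(_ z); rewrite !(qfB, qfN, qfD) !qfT.
by move: (Q_psd z) (Rw_psd (K *m z)); lra.
Qed.

Lemma equilibrium_steady (R : realType) (nx nu nr : nat)
    (A : 'M[R]_nx) (B : 'M[R]_(nx, nu)) (Gx : 'M[R]_(nx, nr)) (Gu : 'M[R]_(nu, nr)) :
  equilibrium_basis A B Gx Gu -> A *m Gx + B *m Gu = Gx.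
Proof.
case=> + _ _; rewrite mul_row_col mulmxBl mul1mx => /eqP.
by rewrite addrAC subr_eq0 => /eqP.
Qed.

Lemma entryD (R : pzRingType) (k l : nat) (A B : 'M[R]_(k, l)) i j :
  (A + B) i j = A i j + B i j.
Proof. by rewrite mxE. Qed.

Lemma entryB (R : pzRingType) (k l : nat) (A B : 'M[R]_(k, l)) i j :
  (A - B) i j = A i j - B i j.
Proof. by rewrite !mxE. Qed.

Lemma ler_sqr_wpM (R : realType) (b a q D : R) :
  0 <= b <= a -> q <= D -> 0 <= D -> b ^+ 2 * q <= a ^+ 2 * D.
Proof.
case/andP=> b_ge0 b_le_a q_le D_ge0; apply: le_trans (_ : b ^+ 2 * D <= _).
  by rewrite ler_wpM2l ?sqr_ge0.
by rewrite ler_wpM2r // lerXn2r ?nnegrE // (le_trans b_ge0).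
Qed.

Lemma closed_loop_error (R : realType) (nx nu nr : nat)
    (A : 'M[R]_nx) (B : 'M[R]_(nx, nu)) (Gx : 'M[R]_(nx, nr)) (Gu : 'M[R]_(nu, nr))
    (K : 'M[R]_(nu, nx)) x r :
  A *m Gx + B *m Gu = Gx ->
  A *m x + B *m kappaT Gx Gu K x r - xbar Gx r = (A - B *m K) *m (x - xbar Gx r).
Proof.
move=> steady; have xbar_steady : xbar Gx r = A *m xbar Gx r + B *m ubar Gu r.
  by rewrite /xbar /ubar !mulmxA -mulmxDl steady.
rewrite {1}xbar_steady /kappaT; move: (ubar Gu r) (xbar Gx r) => u xb.
rewrite !(mulmxDr, mulmxBl, mulmxN) !mulmxA.
move: (A *m x) (A *m xb) (B *m u) (B *m K *m x) (B *m K *m xb) => a b c d e.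
by apply/matrixP => i j; rewrite !mxE; ring.
Qed.

Section TerminalSet.
Context {R : realType} {nx nu nr pc pu m : nat}.
Context {Fc : 'M[R]_(pc, nx)} {fc : 'cV[R]_pc} {Fu : 'M[R]_(pu, nu)} {fu : 'cV[R]_pu}.
Context {O : 'I_m -> set 'cV[R]_nx} {Pi : 'I_m -> 'cV[R]_nx -> 'cV[R]_nx} {eps : R}.
Context {Gx : 'M[R]_(nx, nr)} {Gu : 'M[R]_(nu, nr)} {K : 'M[R]_(nu, nx)} {P : 'M[R]_nx}.
Context {alpha : 'I_(pc + pu + m) -> R}.

Local Notation xbar := (xbar Gx).
Local Notation ubar := (ubar Gu).
Local Notation kappaT := (kappaT Gx Gu K).
Local Notation Vfun := (Vfun Gx P).
Local Notation crow := (crow Fc fc Fu fu Pi Gx Gu K).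
Local Notation Lambda := (Lambda Fc fc Fu fu Pi Gx Gu K P).
Local Notation Tset := (Tset Fc fc Fu fu Pi Gx Gu K P alpha).
Local Notation Reps := (Reps Fc fc Fu fu O Gx Gu eps).
Local Notation normal r j := (xbar r - Pi j (xbar r)).

Definition slack r i := (crow r i).2 - dotv (crow r i).1 (xbar r).

Lemma LambdaE r i : Lambda i r = slack r i ^+ 2 / qf (invmx P) (crow r i).1.
Proof. by []. Qed.

Lemma row_indexP (Q : 'I_(pc + pu + m) -> Prop) :
  (forall ic, Q (lshift m (lshift pu ic))) -> (forall iu, Q (lshift m (rshift pc iu))) ->
  (forall j, Q (rshift (pc + pu) j)) -> forall i, Q i.
Proof.
move=> QC QU QO i; rewrite -[i]splitK; case: (split i) => [i1|j] //=.
by rewrite -[i1]splitK; case: (split i1).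
Qed.

Lemma crow_C r ic : crow r (lshift m (lshift pu ic)) = ((row ic Fc)^T, fc ic 0).
Proof. by rewrite /Defs.crow !(unsplitK (inl _)). Qed.

Lemma crow_U r iu : crow r (lshift m (rshift pc iu)) =
  (- (row iu (Fu *m K))^T, fu iu 0 - (Fu *m ubar r) iu 0 - (Fu *m K *m xbar r) iu 0).
Proof. by rewrite /Defs.crow (unsplitK (inl _)) (unsplitK (inr _)). Qed.

Lemma crow_O r j :
  crow r (rshift (pc + pu) j) = (- normal r j, - dotv (normal r j) (Pi j (xbar r))).
Proof. by rewrite /Defs.crow (unsplitK (inr _)). Qed.

Lemma slack_C r ic : slack r (lshift m (lshift pu ic)) = fc ic 0 - (Fc *m xbar r) ic 0.
Proof. by rewrite /slack crow_C dotv_row. Qed.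

Lemma slack_U r iu : slack r (lshift m (rshift pc iu)) = fu iu 0 - (Fu *m ubar r) iu 0.
Proof. by rewrite /slack crow_U /= dotvNl dotv_row -mulmxA opprK subrK. Qed.

Lemma slack_O r j : slack r (rshift (pc + pu) j) = dotv (normal r j) (normal r j).
Proof. by rewrite /slack crow_O /= dotvNl [in RHS]dotvBr opprK addrC. Qed.

Hypothesis alpha_gt0 : forall i, 0 < alpha i.

Lemma TsetP x r :
  Tset x r <-> forall i, (crow r i).1 != 0 -> Vfun x r <= Lambda i r.
Proof.
rewrite /Defs.Tset /Delta; split=> [/bigmax_leP [_ le0] i ci | le_Lambda].
  by move: (le0 i ci); rewrite lee_fin pmulr_rle0 // subr_le0.
apply/bigmax_leP; split=> // i ci.
by rewrite lee_fin pmulr_rle0 // subr_le0 le_Lambda.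
Qed.

Lemma Tset_Vfun_le x x' r : Vfun x' r <= Vfun x r -> Tset x r -> Tset x' r.
Proof. by move=> V_le /TsetP T_x; apply/TsetP => i /T_x; apply: le_trans. Qed.

Lemma Tset_sub_halfspaces x r : posdef P -> (forall i, 0 <= slack r i) ->
  Tset x r -> forall i, dotv (crow r i).1 x <= (crow r i).2.
Proof.
move=> P_posdef slack_ge0 /TsetP T_x i; have [c0|c_neq0] := eqVneq (crow r i).1 0.
  by move: (slack_ge0 i); rewrite /slack c0 !dotv0l subr0.
exact: ellipsoid_sub_halfspace (slack_ge0 i) (T_x i c_neq0).
Qed.

Lemma crow_le_constraints x r : (forall i, dotv (crow r i).1 x <= (crow r i).2) ->
  [/\ polyhedron Fc fc x, polyhedron Fu fu (kappaT x r)
    & forall j, 0 <= dotv (normal r j) (x - Pi j (xbar r))].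
Proof.
move=> row_le; split=> [ic | iu | j].
- by move: (row_le (lshift m (lshift pu ic))); rewrite crow_C dotv_row.
- move: (row_le (lshift m (rshift pc iu))); rewrite crow_U /= dotvNl dotv_row.
  have -> : Fu *m kappaT x r = Fu *m ubar r - Fu *m K *m x + Fu *m K *m xbar r.
    by rewrite /Defs.kappaT !mulmxBr opprB addrA !mulmxA addrAC.
  by rewrite entryD entryB; lra.
- move: (row_le (rshift (pc + pu) j)); rewrite crow_O /= dotvNl dotvBr; lra.
Qed.

Lemma Vfun_near_le r (mu : R) : 0 < mu -> exists2 e, 0 < e &
  forall x' r', enorm (x' - xbar r) < e -> enorm (r' - r) < e -> Vfun x' r' <= mu.
Proof.
move=> mu_gt0; have [s s_gt0 qf_le] := qf_small P mu_gt0.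
have s2_gt0 : 0 < s / 2 by rewrite divr_gt0.
have [d d_gt0 Gx_small] := mulmx_enorm_small Gx s2_gt0.
exists (Num.min d (s / 2)) => [|x' r']; first by rewrite lt_min d_gt0.
rewrite !lt_min => /andP [_ x'_near] /andP [/Gx_small Gx_le _]; apply: qf_le.
have -> : x' - xbar r' = (x' - xbar r) - Gx *m (r' - r).
  by rewrite /Defs.xbar mulmxBr opprB addrA subrK.
by apply: le_trans (enormD _ _) _; rewrite enormN; lra.
Qed.

Lemma Reps_closure_enorm_ge r j q :
  Reps r -> in_closure (O j) q -> eps <= enorm (xbar r - q).
Proof. by case=> _ O_far _; apply: in_closure_enorm_ge => y; exact: sdist_enorm_ge. Qed.

Lemma Reps_slack_ge0 r : 0 < eps -> Reps r -> forall i, 0 <= slack r i.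
Proof.
move=> eps_gt0 [Fc_le _ Fu_le]; apply: row_indexP => [ic|iu|j].
- by move: (Fc_le ic); rewrite slack_C entryB; lra.
- by move: (Fu_le iu); rewrite slack_U entryB; lra.
- by rewrite slack_O dotv_ge0.
Qed.

Hypothesis Pi_proj : forall j x, is_proj (O j) x (Pi j x).

Lemma Reps_normal_neq0 r j : 0 < eps -> Reps r -> normal r j != 0.
Proof.
move=> eps_gt0 /Reps_closure_enorm_ge /(_ (proj1 (Pi_proj j (xbar r)))) eps_le.
by apply: contraTneq eps_le => ->; rewrite enorm0 -ltNge.
Qed.

Lemma Reps_slack_near r : 0 < eps -> Reps r ->
  exists2 d, 0 < d & forall r', enorm (r' - r) < d ->
  [/\ forall ic, eps / 2 <= slack r' (lshift m (lshift pu ic)),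
      forall iu, eps / 2 <= slack r' (lshift m (rshift pc iu))
    & forall j, eps / 2 <= enorm (normal r' j)].
Proof.
move=> eps_gt0 r_eps; have [Fc_le _ Fu_le] := r_eps.
have e2_gt0 : 0 < eps / 2 by rewrite divr_gt0.
have [d1 d1_gt0 FcGx_small] := mulmx_enorm_small (Fc *m Gx) e2_gt0.
have [d2 d2_gt0 FuGu_small] := mulmx_enorm_small (Fu *m Gu) e2_gt0.
have [d3 d3_gt0 Gx_small] := mulmx_enorm_small Gx e2_gt0.
exists (Num.min d1 (Num.min d2 d3)) => [|r']; first by rewrite !lt_min d1_gt0 d2_gt0.
rewrite !lt_min => /and3P [/FcGx_small FcGx_le /FuGu_small FuGu_le /Gx_small Gx_le].
have shift k (M : 'M[R]_(k, nr)) : M *m r' = M *m r + M *m (r' - r).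
  by rewrite mulmxBr addrC subrK.
have entry_small k (v : 'cV[R]_k) i : enorm v <= eps / 2 -> `|v i 0| <= eps / 2.
  exact: le_trans (entry_le_enorm v i).
split=> [ic | iu | j].
- move: (Fc_le ic) (entry_small _ _ ic FcGx_le); rewrite slack_C /Defs.xbar !mulmxA.
  by rewrite shift entryB entryD ler_norml; lra.
- move: (Fu_le iu) (entry_small _ _ iu FuGu_le); rewrite slack_U /Defs.ubar !mulmxA.
  by rewrite shift entryB entryD ler_norml; lra.
- have := Reps_closure_enorm_ge r_eps (proj1 (Pi_proj j (xbar r'))).
  have -> : xbar r - Pi j (xbar r') = normal r' j - Gx *m (r' - r).
    by rewrite /Defs.xbar (shift _ Gx) addrAC addrK.
  by move=> /le_trans /(_ (enormD _ _)); rewrite enormN; lra.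
Qed.

Lemma Lambda_near_lb r : posdef P -> 0 < eps -> Reps r ->
  exists2 d, 0 < d & exists2 mu, 0 < mu & forall r', enorm (r' - r) < d ->
    forall i, (crow r' i).1 != 0 -> mu <= Lambda i r'.
Proof.
move=> P_posdef eps_gt0 r_eps; have [d d_gt0 slack_near] := Reps_slack_near eps_gt0 r_eps.
have [CPi CPi_ge0 qPi] := qf_le_enorm (invmx P).
have [MC MC_ge0 qC] := finite_ub (fun ic => qf (invmx P) (row ic Fc)^T).
have [MU MU_ge0 qU] := finite_ub (fun iu => qf (invmx P) (- (row iu (Fu *m K))^T)).
set D := 1 + CPi + MC + MU; have D_gt0 : 0 < D by rewrite /D; lra.
have e2_ge0 : 0 <= eps / 2 by rewrite divr_ge0 // ltW.
exists d => //; exists ((eps / 2) ^+ 2 / D) => [|r' /slack_near [sC sU sO] i c_neq0].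
  by rewrite divr_gt0 // exprn_gt0 // divr_gt0.
rewrite LambdaE ler_pdivlMr ?qf_invmx_gt0 // mulrAC ler_pdivrMr //.
move: i c_neq0; apply: row_indexP => [ic|iu|j] _.
- by rewrite crow_C ler_sqr_wpM ?e2_ge0 ?sC ?ltW //=; move: (qC ic); rewrite /D; lra.
- by rewrite crow_U ler_sqr_wpM ?e2_ge0 ?sU ?ltW //=; move: (qU iu); rewrite /D; lra.
- have := enorm_ge0 (normal r' j); rewrite crow_O slack_O -enorm_sqr /=.
  set a := enorm (normal r' j) => a_ge0.
  have -> : a ^+ 2 ^+ 2 * D = a ^+ 2 * (D * a ^+ 2) by ring.
  rewrite ler_sqr_wpM ?e2_ge0 ?sO ?mulr_ge0 ?sqr_ge0 ?(ltW D_gt0) //.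
  by apply: le_trans (qPi _) _; rewrite enormN ler_wpM2r ?sqr_ge0 // /D; lra.
Qed.

End TerminalSet.

Theorem lemma3 (R : realType) (nx nu nr pc pu m : nat)
  (A : 'M[R]_nx) (B : 'M[R]_(nx, nu)) (Gx : 'M[R]_(nx, nr)) (Gu : 'M[R]_(nu, nr))
  (Fc : 'M[R]_(pc, nx)) (fc : 'cV[R]_pc) (Fu : 'M[R]_(pu, nu)) (fu : 'cV[R]_pu)
  (O : 'I_m -> set 'cV[R]_nx) (Pi : 'I_m -> 'cV[R]_nx -> 'cV[R]_nx)
  (eps : R) (K : 'M[R]_(nu, nx)) (Q P : 'M[R]_nx) (Rw : 'M[R]_nu)
  (alpha : 'I_(pc + pu + m) -> R) :
  stabilizable A B ->
  equilibrium_basis A B Gx Gu ->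
  ebounded (polyhedron Fc fc) ->
  ebounded (polyhedron Fu fu) ->
  (forall j, [/\ convex_set (O j), eopen (O j) & O j !=set0]) ->
  (forall j x, is_proj (O j) x (Pi j x)) ->
  0 < eps ->
  posdef Q -> posdef Rw -> posdef P ->
  psd (- (K^T *m Rw *m K + Q) - ((A - B *m K)^T *m P *m (A - B *m K) - P)) ->
  (forall i, 0 < alpha i) ->
  (* (c) *)
  (forall x r, Reps Fc fc Fu fu O Gx Gu eps r ->
     Tset Fc fc Fu fu Pi Gx Gu K P alpha x r ->
     [/\ Tset Fc fc Fu fu Pi Gx Gu K P alpha (A *m x + B *m kappaT Gx Gu K x r) r,
         Xset Fc fc O x
       & polyhedron Fu fu (kappaT Gx Gu K x r)]) /\
  (* (d) *)
  (forall r, Reps Fc fc Fu fu O Gx Gu eps r ->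
     interior_pt (Tset Fc fc Fu fu Pi Gx Gu K P alpha) (xbar Gx r) r).
Proof.
move=> _ /equilibrium_steady steady _ _ O_conv Pi_proj eps_gt0 /posdef_psd Q_psd
  /posdef_psd Rw_psd P_posdef lyap alpha_gt0.
split=> [x r r_eps T_x | r r_eps].
  have [x_C kappa_U x_H] := crow_le_constraints
    (Tset_sub_halfspaces alpha_gt0 P_posdef (Reps_slack_ge0 eps_gt0 r_eps) T_x).
  split=> //.
    apply: (Tset_Vfun_le alpha_gt0 _ T_x).
    by rewrite /Vfun closed_loop_error //; exact: lyapunov_qf_le.
  split=> // j; have [O_convex O_open _] := O_conv j.
  have [p_cl p_min] := Pi_proj j (xbar Gx r).
  have w_neq0 := Reps_normal_neq0 Pi_proj j eps_gt0 r_eps.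
  exact: (proj_separates O_convex p_cl p_min O_open w_neq0 (x_H j)).
have [d d_gt0 [mu mu_gt0 Lambda_ge]] :=
  Lambda_near_lb (K := K) Pi_proj P_posdef eps_gt0 r_eps.
have [e e_gt0 V_le] := Vfun_near_le (Gx := Gx) (P := P) r mu_gt0.
exists (Num.min d e) => [|x' r']; first by rewrite lt_min d_gt0.
rewrite !lt_min => /andP [_ x'_near] /andP [r'_d r'_e].
apply/(TsetP alpha_gt0) => i c_neq0.
exact: le_trans (V_le _ _ x'_near r'_e) (Lambda_ge _ r'_d i c_neq0).
Qed.
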